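(* Let $H=(V,E)$ be an uncapacitated hypergraph, let $v_1,\ldots,v_n$ be an MA-ordering of $H$, fix a head ordering of the edges, let $k\ge0$ be an integer, and let $H_k$ be the hypergraph obtained from $H$ via this ordering as described in the context. Then $v_1,\ldots,v_n$ is an MA-ordering of $H_k$.
   Context: A hypergraph $H=(V,E)$ has finite vertex set $V$ and a finite multiset $E$ of edges (subsets of $V$), each with capacity $1$. For subsets $A_1,\ldots,A_k$, $d(A_1,\ldots,A_k)$ is the number of edges meeting every $A_i$ (a vertex $v$ stands for $\{v\}$). For an ordering $v_1,\ldots,v_n$, $V_i=\{v_1,\ldots,v_i\}$ ($V_0=\emptyset$); it is an MA-ordering if $d(V_{i-1},v_i)\ge d(V_{i-1},v_j)$ for all $1\le i<j\le n$. The head $h(e)$ of an edge is its vertex of smallest index; a head ordering of the edges is one in which the index of the head is non-decreasing; $e$ is a backward edge of $v$ if $v\in e$ and $h(e)\ne v$; $D_k(v)$ is the set of the first $k$ backward edges of $v$ in the head ordering (all of them if fewer than $k$). For $e\in E$ let $e'=\{v\in e: e\in D_k(v)\}\cup\{h(e)\}$, and $H_k=(V,E_k)$ where $E_k$ is the multiset $\{e' : e\in E, |e'|\ge2\}$. *)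

From mathcomp Require Import all_boot.
Set Implicit Arguments. Unset Strict Implicit. Unset Printing Implicit Defensive.

(* A hypergraph on a finite vertex type V: the edge multiset is a sequence
   E : seq {set V} (each occurrence is one edge of capacity 1; the order of
   the sequence is the fixed (head) ordering of the edges).
   An ordering v_1..v_n of V is a duplicate-free sequence s containing every
   vertex; vertex v has (0-based) index [index v s]. *)

Section Hyp.
Variable V : finType.

Definition is_vertex_ordering (s : seq V) : Prop := uniq s /\ forall v : V, v \in s.

Definition prefix_set (s : seq V) (i : nat) : {set V} := [set x in take i s].

Definition dAv (E : seq {set V}) (A : {set V}) (v : V) : nat :=
  count (fun e => (e :&: A != set0) && (v \in e)) E.

(* MA-ordering: d(V_{i-1}, v_i) >= d(V_{i-1}, v_j) for all i < j.
   (stated over vertices u = v_i, w = v_j, using that s lists all vertices) *)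
Definition MA_ordering (s : seq V) (E : seq {set V}) : Prop :=
  forall u w : V, index u s < index w s ->
    dAv E (prefix_set s (index u s)) w <= dAv E (prefix_set s (index u s)) u.

(* the head of e, as a set: {h(e)} if e is nonempty, set0 otherwise *)
Definition head_set (s : seq V) (e : {set V}) : {set V} :=
  [set v in e | [forall y in e, index v s <= index y s]].

Definition head_ordering (s : seq V) (E : seq {set V}) : Prop :=
  forall p q : nat, forall v w : V, p < q < size E ->
    v \in head_set s (nth set0 E p) -> w \in head_set s (nth set0 E q) ->
    index v s <= index w s.

Definition backward (s : seq V) (e : {set V}) (v : V) : bool :=
  (v \in e) && (v \notin head_set s e).

Definition in_Dk (k : nat) (s : seq V) (E : seq {set V}) (v : V) (p : nat) : bool :=
  backward s (nth set0 E p) v &&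
  (count (fun q => backward s (nth set0 E q) v) (iota 0 p) < k).

Definition reduced_edge (k : nat) (s : seq V) (E : seq {set V}) (p : nat) : {set V} :=
  [set v in nth set0 E p | in_Dk k s E v p] :|: head_set s (nth set0 E p).

Definition Hk_edges (k : nat) (s : seq V) (E : seq {set V}) : seq {set V} :=
  [seq reduced_edge k s E p | p <- iota 0 (size E) & 1 < #|reduced_edge k s E p|].

End Hyp.

From mathcomp Require Import all_boot.
From mathcomp Require Import zify.

Set Implicit Arguments.
Unset Strict Implicit.
Unset Printing Implicit Defensive.

(* Let A = V_{i-1} and let x lie outside A.  An edge meeting A has its head in
   A, so it is a backward edge of x whenever it contains x; by the head
   ordering, every earlier edge containing x also meets A.  Hence an edge of
   H_k meets A and contains x exactly when it comes from one of the first k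
   edges of H meeting A and containing x, i.e. d_{H_k}(A, x) = min(k, d_H(A, x)).
   Since t |-> min(k, t) is monotone, the MA inequalities of H carry over to H_k. *)

Lemma count_first_k_hits (B : pred nat) (k n : nat) :
  count (fun p => B p && (count B (iota 0 p) < k)) (iota 0 n)
  = minn k (count B (iota 0 n)).
Proof.
elim: n => [|n IHn]; first by rewrite minn0.
rewrite -addn1 iotaD !count_cat IHn /= add0n !addn0.
by case: (B n) => /=; [case: ltnP => /=|]; lia.
Qed.

Section HeadSet.

Variables (V : finType) (s : seq V).
Implicit Types (e : {set V}) (h x y : V).

Lemma head_set_sub e : head_set s e \subset e.
Proof. by apply/subsetP => h; rewrite inE => /andP[]. Qed.

Lemma head_set_min e h y : h \in head_set s e -> y \in e -> index h s <= index y s.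
Proof. by rewrite inE => /andP[_ /forall_inP]; apply. Qed.

Lemma head_set_exists e y : y \in e -> exists h, h \in head_set s e.
Proof.
move=> ye; case: (arg_minnP (fun v => index v s) ye) => h he h_min.
by exists h; rewrite inE; apply/andP; split=> //; apply/forall_inP.
Qed.

Lemma prefix_set_index_closed i h y :
  index h s <= index y s -> y \in prefix_set s i -> h \in prefix_set s i.
Proof.
move=> hy; rewrite !inE => y_take.
have ys := mem_take y_take.
have hs : h \in s by rewrite -index_mem (leq_ltn_trans hy) ?index_mem.
by move: y_take; rewrite !in_take // => /(leq_ltn_trans hy).
Qed.

Lemma notin_prefix_set i x : i <= index x s -> x \notin prefix_set s i.
Proof.
move=> ix; rewrite inE; apply/negP => x_take.
have xs := mem_take x_take.
by move: x_take; rewrite in_take // ltnNge ix.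
Qed.

Lemma head_set_in_prefix i e h :
  e :&: prefix_set s i != set0 -> h \in head_set s e -> h \in prefix_set s i.
Proof.
case/set0Pn => y; rewrite inE => /andP[ye yA] hh.
exact: prefix_set_index_closed (head_set_min hh ye) yA.
Qed.

Lemma notin_head_set_outside_prefix i e x :
  x \notin prefix_set s i -> e :&: prefix_set s i != set0 -> x \notin head_set s e.
Proof. by move=> xA eA; apply: contra xA; apply: head_set_in_prefix. Qed.

End HeadSet.

Definition backward_meeting (V : finType) (s : seq V) (E : seq {set V})
    (A : {set V}) (x : V) (p : nat) : bool :=
  backward s (nth set0 E p) x && (nth set0 E p :&: A != set0).

Section ReducedHypergraph.

Variables (V : finType) (s : seq V) (E : seq {set V}) (k i : nat).
Hypothesis headE : head_ordering s E.

Local Notation A := (prefix_set s i).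
Local Notation edge p := (nth set0 E p).
Local Notation redge p := (reduced_edge k s E p).

Lemma dAv_outside_prefix x :
  x \notin A -> dAv E A x = count (backward_meeting s E A x) (iota 0 (size E)).
Proof.
move=> xA; rewrite /dAv -{1}(mkseq_nth set0 E) /mkseq count_map.
apply: eq_count => p /=; rewrite /backward_meeting /backward.
case eA: (edge p :&: A != set0); last by rewrite !andbF.
by rewrite andbT (notin_head_set_outside_prefix xA eA) andbT.
Qed.

Lemma head_ordering_meets_prefix r p :
  r < p < size E -> edge p :&: A != set0 -> edge r != set0 -> edge r :&: A != set0.
Proof.
move=> rp pA /set0Pn [y yr].
have [hr hr_head] := head_set_exists s yr.
have [z /setIP [zp _]] := set0Pn _ pA.
have [hp hp_head] := head_set_exists s zp.
have hpA := head_set_in_prefix pA hp_head.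
have hrA := prefix_set_index_closed (headE rp hr_head hp_head) hpA.
by apply/set0Pn; exists hr; rewrite inE hrA (subsetP (head_set_sub s _) _ hr_head).
Qed.

Lemma in_Dk_meeting_prefix x p :
  p < size E -> edge p :&: A != set0 ->
  in_Dk k s E x p = backward_meeting s E A x p
                    && (count (backward_meeting s E A x) (iota 0 p) < k).
Proof.
move=> pE pA; rewrite /in_Dk /backward_meeting pA andbT.
congr (_ && (_ < k)); apply: eq_in_count => r; rewrite mem_iota => /andP[_ rp] /=.
case br: (backward _ _ _) => //=; apply/esym.
apply: head_ordering_meets_prefix pA _; first by rewrite rp pE.
by apply/set0Pn; exists x; case/andP: br.
Qed.

Lemma mem_reduced_edge p v :
  (v \in redge p) = in_Dk k s E v p || (v \in head_set s (edge p)).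
Proof.
rewrite /reduced_edge in_setU in_set andbC.
by case: (boolP (in_Dk _ _ _ _ _)) => //= /andP[/andP[->]].
Qed.

Lemma reduced_edge_sub p : redge p \subset edge p.
Proof.
apply/subsetP => v; rewrite mem_reduced_edge.
by case/orP => [/andP[/andP[]] | /(subsetP (head_set_sub s _))].
Qed.

Lemma Hk_edge_meets_outside_prefix x p : p < size E -> x \notin A ->
  [&& redge p :&: A != set0, x \in redge p & 1 < #|redge p|]
  = backward_meeting s E A x p && (count (backward_meeting s E A x) (iota 0 p) < k).
Proof.
move=> pE xA; case eA: (edge p :&: A != set0); last first.
  rewrite /backward_meeting eA andbF /=; apply/negbTE; apply: contraFN eA.
  case/and3P => /set0Pn [y yRA] _ _; apply/set0Pn; exists y.
  exact: subsetP (setSI A (reduced_edge_sub p)) y yRA.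
have [z /setIP [zp _]] := set0Pn _ eA.
have [h h_head] := head_set_exists s zp.
have hA := head_set_in_prefix eA h_head.
have h_red : h \in redge p by rewrite mem_reduced_edge h_head orbT.
have -> /= : redge p :&: A != set0 by apply/set0Pn; exists h; rewrite inE h_red hA.
rewrite mem_reduced_edge (negbTE (notin_head_set_outside_prefix xA eA)) orbF.
rewrite -in_Dk_meeting_prefix //; apply/andb_idr => xDk.
apply/card_gt1P; exists x, h; split=> //; first by rewrite mem_reduced_edge xDk.
by apply: contraNneq xA => ->.
Qed.

Lemma dAv_Hk_edges_outside_prefix x :
  x \notin A -> dAv (Hk_edges k s E) A x = minn k (dAv E A x).
Proof.
move=> xA; rewrite dAv_outside_prefix // -count_first_k_hits.
rewrite /dAv /Hk_edges count_map count_filter.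
apply: eq_in_count => p; rewrite mem_iota => /andP[_ pE] /=.
by rewrite -andbA Hk_edge_meets_outside_prefix.
Qed.

End ReducedHypergraph.

Theorem mainTheorem13 (V : finType) (E : seq {set V}) (s : seq V) (k : nat) :
  is_vertex_ordering s -> MA_ordering s E -> head_ordering s E ->
  MA_ordering s (Hk_edges k s E).
Proof.
move=> _ MA_E headE u w uw.
have uA := notin_prefix_set (leqnn (index u s)).
have wA := notin_prefix_set (ltnW uw).
rewrite !dAv_Hk_edges_outside_prefix //.
by rewrite leq_min geq_minl (leq_trans (geq_minr _ _) (MA_E u w uw)).
Qed.
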